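(* Let $\nu\ge0$, $\Psi_\nu(x)=I_{\nu+1}(x)/I_\nu(x)$ and $$\xi_\nu(x)=\frac{\log\left(1-\frac{2(\nu+1)}{x}\Psi_\nu(x)\right)}{\log\Psi_\nu(x)}.$$ Then $$\lim_{x\to\infty}\xi_\nu(x)=\frac{4(\nu+1)}{2\nu+1}.$$
   Context: $I_\nu$ denotes the modified Bessel function of the first kind of order $\nu$. *)

From Stdlib Require Import Reals.
From Coquelicot Require Import Coquelicot.
Open Scope R_scope.

Definition Gamma (s : R) : R :=
  RInt_gen (fun t => Rpower t (s - 1) * exp (- t)) (at_right 0) (Rbar_locally p_infty).

Definition besselI (nu x : R) : R :=
  Series (fun k : nat =>
    Rpower (x / 2) (2 * INR k + nu) / (INR (Factorial.fact k) * Gamma (INR k + nu + 1))).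

Definition Psi (nu x : R) : R := besselI (nu + 1) x / besselI nu x.

Definition xi (nu x : R) : R :=
  ln (1 - 2 * (nu + 1) / x * Psi nu x) / ln (Psi nu x).

From Stdlib Require Import Reals Lra Psatz Classical.
From Coquelicot Require Import Coquelicot.
Open Scope R_scope.

(* Write I_mu(x) = (x/2)^mu F_mu((x/2)^2) with F_mu(z) = sum_k z^k / (k! Gamma(k+mu+1)).
   Gamma(s+1) = s Gamma(s) makes F_mu entire with F_mu' = F_(mu+1) and
   F_mu = (mu+1) F_(mu+1) + z F_(mu+2), so Psi_nu = (x/2) F_(nu+1) / F_nu satisfies the
   Riccati equation Psi' = 1 - (2nu+1) Psi / x - Psi^2.  The defect W = x (1 - Psi) then
   satisfies W' = (2nu+1) - 2W + W (W - 2nu) / x; for large x this vector field points into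
   every neighbourhood of (2nu+1)/2, so W -> (2nu+1)/2.  Since x log(1 - u/x) -> -lim u,
   the numerator of xi behaves like -2(nu+1)/x and its denominator log(1 - W/x) like
   -(2nu+1)/(2x). *)

Lemma exp_le x y : x <= y -> exp x <= exp y.
Proof. intros [H| ->]; [left; now apply exp_increasing | lra]. Qed.

Lemma INR_fact_pos n : 0 < INR (Factorial.fact n).
Proof. apply lt_0_INR, Factorial.lt_O_fact. Qed.

Lemma pow_le_fact_mul_exp t n : 0 <= t -> t ^ n <= INR (Factorial.fact n) * exp t.
Proof.
  intros Ht.
  assert (Hterm : t ^ n / INR (Factorial.fact n) <= exp t).
  { eapply Rle_trans; [|exact (exp_ge_taylor t n Ht)].
    destruct n as [|n]; [simpl; lra|].
    rewrite tech5.
    enough (0 <= sum_f_R0 (fun k => t ^ k / INR (Factorial.fact k)) n) by lra.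
    apply cond_pos_sum. intros k.
    apply Rdiv_le_0_compat; [now apply pow_le | apply INR_fact_pos]. }
  pose proof (INR_fact_pos n).
  apply Rmult_le_reg_r with (/ INR (Factorial.fact n)); [now apply Rinv_0_lt_compat|].
  replace (INR (Factorial.fact n) * exp t * / INR (Factorial.fact n)) with (exp t)
    by (field; lra).
  exact Hterm.
Qed.

Lemma Rpower_mul_exp_neg_le_fact p t n :
  1 <= t -> p <= INR n -> Rpower t p * exp (- t) <= INR (Factorial.fact n).
Proof.
  intros Ht Hp.
  assert (Hpow : Rpower t p <= t ^ n).
  { rewrite <- Rpower_pow by lra. apply Rle_Rpower; lra. }
  pose proof (pow_le_fact_mul_exp t n ltac:(lra)).
  assert (0 < exp t) by apply exp_pos.
  assert (0 <= Rpower t p) by (left; apply exp_pos).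
  rewrite exp_Ropp.
  apply Rmult_le_reg_r with (exp t); [lra|].
  replace (Rpower t p * / exp t * exp t) with (Rpower t p) by (field; lra).
  nra.
Qed.

Lemma ln_one_plus_le h : -1 < h -> ln (1 + h) <= h.
Proof. intros Hh. rewrite <- (ln_exp h) at 2. apply ln_le; [lra | apply exp_ineq1_le]. Qed.

Lemma ln_one_plus_ge h : -1 < h -> h / (1 + h) <= ln (1 + h).
Proof.
  intros Hh.
  assert (Hk : -1 < - h / (1 + h)).
  { replace (- h / (1 + h)) with (/ (1 + h) - 1) by (field; lra).
    enough (0 < / (1 + h)) by lra. apply Rinv_0_lt_compat; lra. }
  pose proof (ln_one_plus_le _ Hk) as H.
  replace (1 + - h / (1 + h)) with (/ (1 + h)) in H by (field; lra).
  rewrite ln_Rinv in H by lra.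
  replace (h / (1 + h)) with (- (- h / (1 + h))) by (field; lra).
  lra.
Qed.

Lemma Rdiv_le_of_le_mul a b c : 0 < c -> a <= b * c -> a / c <= b.
Proof.
  intros Hc H. apply Rmult_le_reg_r with c; [exact Hc |].
  unfold Rdiv. rewrite Rmult_assoc, Rinv_l, Rmult_1_r by lra. exact H.
Qed.

Lemma ball_R_abs (x e y : R) : @ball R_UniformSpace x e y <-> Rabs (y - x) < e.
Proof. reflexivity. Qed.

Lemma nondecreasing_bounded_lim (g : R -> R) (c M : R) :
  (forall x y, c <= x -> x <= y -> g x <= g y) ->
  (forall x, c <= x -> g x <= M) ->
  exists l, (forall x, c <= x -> g x <= l) /\
    filterlim g (Rbar_locally p_infty) (locally l).
Proof.
  intros Hmono Hbound.
  set (E := fun y => exists x, c <= x /\ y = g x).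
  assert (HE : bound E) by (exists M; intros y [x [Hx ->]]; now apply Hbound).
  assert (Hne : exists y, E y) by (exists (g c), c; split; [lra | easy]).
  destruct (completeness E HE Hne) as [l [Hub Hlub]].
  exists l. split; [intros x Hx; apply Hub; now exists x|].
  apply filterlim_locally. intros eps.
  assert (Hx0 : exists x0, c <= x0 /\ l - eps < g x0).
  { apply NNPP. intros Hno.
    enough (l <= l - eps) by (destruct eps; simpl in *; lra).
    apply Hlub. intros y [x [Hx ->]]. apply Rnot_lt_le. intros Hlt.
    apply Hno. now exists x. }
  destruct Hx0 as [x0 [Hx0 Hgx0]].
  exists x0. intros x Hx. apply ball_R_abs, Rabs_def1.
  - enough (g x <= l) by (destruct eps; simpl in *; lra). apply Hub. exists x; split; [lra | easy].
  - enough (g x0 <= g x) by lra. apply Hmono; lra.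
Qed.

Lemma is_lim_div_id (u : R -> R) (U : R) : is_lim u p_infty U ->
  is_lim (fun x => u x / x) p_infty 0.
Proof.
  intros Hu. replace (Finite 0) with (Rbar_div U p_infty) by (simpl; f_equal; ring).
  apply is_lim_div; [exact Hu | apply is_lim_id | easy | easy].
Qed.

Lemma is_lim_mul_ln_one_sub_div (u : R -> R) (U : R) : is_lim u p_infty U ->
  is_lim (fun x => x * ln (1 - u x / x)) p_infty (- U).
Proof.
  intros Hu.
  apply is_lim_le_le_loc with (f := fun x => - u x / (1 - u x / x)) (g := fun x => - u x).
  - destruct (proj2 (is_lim_spec u p_infty U) Hu (mkposreal 1 Rlt_0_1)) as [M HM].
    exists (Rmax M (2 * (Rabs U + 1))). intros x Hx.
    specialize (HM x (Rle_lt_trans _ _ _ (Rmax_l _ _) Hx)). simpl in HM.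
    pose proof (Rle_lt_trans _ _ _ (Rmax_r _ _) Hx) as Hx2.
    assert (Hux : Rabs (u x) <= Rabs U + 1).
    { replace (u x) with ((u x - U) + U) by ring.
      eapply Rle_trans; [apply Rabs_triang | lra]. }
    pose proof (Rabs_pos U).
    assert (Hh : Rabs (u x / x) < 1 / 2).
    { unfold Rdiv. rewrite Rabs_mult, Rabs_inv, (Rabs_pos_eq x) by lra.
      apply Rmult_lt_reg_r with x; [lra |].
      rewrite Rmult_assoc, Rinv_l, Rmult_1_r by lra. lra. }
    apply Rabs_def2 in Hh.
    set (h := - (u x / x)).
    assert (Hh1 : -1 < h) by (unfold h; lra).
    replace (1 - u x / x) with (1 + h) by (unfold h; ring).
    replace (- u x) with (x * h) by (unfold h; field; lra).
    pose proof (ln_one_plus_ge h Hh1). pose proof (ln_one_plus_le h Hh1).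
    split; [unfold Rdiv; rewrite Rmult_assoc |]; apply Rmult_le_compat_l; lra.
  - replace (Finite (- U)) with (Rbar_div (- U) (1 - 0)) by (simpl; f_equal; field).
    apply is_lim_div; [apply (is_lim_opp u p_infty U Hu) | | simpl; injection; lra | easy].
    eapply is_lim_minus; [apply is_lim_const | exact (is_lim_div_id _ _ Hu) | reflexivity].
  - apply (is_lim_opp u p_infty U Hu).
Qed.

Section Trapping.

Variables (f df : R -> R) (X L : R).
Hypothesis Hderive : forall x, X < x -> is_derive f x (df x).

Lemma continuous_of_is_derive_after x : X < x -> continuous f x.
Proof.
  intros Hx. apply (ex_derive_continuous (K := R_AbsRing) (V := R_NormedModule)).
  eexists. now apply Hderive.
Qed.

Lemma MVT_after a b : X < a -> a < b -> exists c, f b - f a = df c * (b - a) /\ a < c < b.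
Proof.
  intros Ha Hab. apply MVT_cor2; [exact Hab |].
  intros c Hc. apply is_derive_Reals, Hderive. lra.
Qed.

Lemma exists_le_of_is_derive_le_neg eta : 0 < eta ->
  (forall x, X < x -> L < f x -> df x <= - eta) -> exists x1, X < x1 /\ f x1 <= L.
Proof.
  intros Heta Hneg. apply NNPP. intros Hno.
  (* Otherwise f would decrease at rate eta forever while staying above L. *)
  assert (Habove : forall x, X < x -> L < f x).
  { intros x Hx. apply Rnot_le_lt. intros Hle. apply Hno. now exists x. }
  set (x0 := X + 1). set (x := x0 + (f x0 - L) / eta + 1).
  assert (Hf0 : L < f x0) by (apply Habove; unfold x0; lra).
  assert (Hgap : 0 < (f x0 - L) / eta) by (apply Rdiv_lt_0_compat; lra).
  destruct (MVT_after x0 x) as [c [Hc Hcx]]; [unfold x0; lra | unfold x; lra |].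
  assert (df c <= - eta) by (apply Hneg; [| apply Habove]; unfold x0 in *; lra).
  assert (L < f x) by (apply Habove; unfold x, x0 in *; lra).
  assert (eta * ((f x0 - L) / eta) = f x0 - L) by (field; lra).
  assert (f x - f x0 <= - eta * (x - x0)) by (rewrite Hc; apply Rmult_le_compat_r; lra).
  replace (x - x0) with ((f x0 - L) / eta + 1) in * by (unfold x; ring).
  nra.
Qed.

Lemma le_after_of_is_derive_neg x1 :
  (forall x, X < x -> L < f x -> df x < 0) -> X < x1 -> f x1 <= L ->
  forall x, x1 < x -> f x <= L.
Proof.
  intros Hneg Hx1 Hfx1 x Hx. apply Rnot_lt_le. intros Hfx.
  (* A maximum of f on [x1, x] lies above L, so f is still decreasing just to its left. *)
  destruct (continuity_ab_maj f x1 x) as [m [Hmax [Hm1 Hm2]]]; [lra | |].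
  { intros c Hc. apply continuity_pt_filterlim, continuous_of_is_derive_after. lra. }
  assert (Hfm : f x <= f m) by (apply Hmax; lra).
  assert (Hm : x1 < m) by (destruct Hm1 as [|<-]; lra).
  assert (Hgap : 0 < f m - L) by lra.
  assert (Hcont : continuous f m) by (apply continuous_of_is_derive_after; lra).
  destruct (proj1 (filterlim_locally _ _) Hcont (mkposreal _ Hgap)) as [alpha Halpha].
  set (t := Rmax ((x1 + m) / 2) (m - alpha / 2)).
  assert ((x1 + m) / 2 <= t) by apply Rmax_l.
  assert (m - alpha / 2 <= t) by apply Rmax_r.
  pose proof (cond_pos alpha).
  assert (t < m) by (apply Rmax_lub_lt; lra).
  destruct (MVT_after t m) as [c [Hc Hct]]; [lra | lra |].
  assert (Hfc : L < f c).
  { assert (Hball : ball m alpha c) by (apply ball_R_abs; rewrite Rabs_left1; lra).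
    specialize (Halpha c Hball). change (Rabs (f c - f m) < f m - L) in Halpha.
    apply Rabs_def2 in Halpha. lra. }
  assert (df c * (m - t) < 0) by (apply Rmult_neg_pos; [apply Hneg | ]; lra).
  assert (f t <= f m) by (apply Hmax; lra).
  lra.
Qed.

Lemma eventually_le_of_is_derive_le_neg eta : 0 < eta ->
  (forall x, X < x -> L < f x -> df x <= - eta) -> exists Y, forall x, Y < x -> f x <= L.
Proof.
  intros Heta Hneg.
  destruct (exists_le_of_is_derive_le_neg eta Heta Hneg) as [x1 [Hx1 Hfx1]].
  exists x1. apply le_after_of_is_derive_neg; [| exact Hx1 | exact Hfx1].
  intros x Hx HL. specialize (Hneg x Hx HL). lra.
Qed.

End Trapping.

Lemma eventually_near_of_is_derive (f df : R -> R) (X L d eta : R) : 0 < eta ->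
  (forall x, X < x -> is_derive f x (df x)) ->
  (forall x, X < x -> L + d < f x -> df x <= - eta) ->
  (forall x, X < x -> f x < L - d -> eta <= df x) ->
  exists Y, forall x, Y < x -> Rabs (f x - L) <= d.
Proof.
  intros Heta Hderive Habove Hbelow.
  destruct (eventually_le_of_is_derive_le_neg f df X (L + d) Hderive eta Heta Habove)
    as [Y1 HY1].
  destruct (eventually_le_of_is_derive_le_neg (fun x => - f x) (fun x => - df x) X (- (L - d)))
    with eta as [Y2 HY2]; [| exact Heta | |].
  - intros x Hx. apply (is_derive_opp f). now apply Hderive.
  - intros x Hx Hf. enough (eta <= df x) by lra. apply Hbelow; lra.
  - exists (Rmax Y1 Y2). intros x Hx.
    specialize (HY1 x (Rle_lt_trans _ _ _ (Rmax_l _ _) Hx)).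
    specialize (HY2 x (Rle_lt_trans _ _ _ (Rmax_r _ _) Hx)).
    apply Rabs_le. lra.
Qed.

Lemma is_RInt_gen_of_lim_upper (f : R -> R) (a l : R) (G : (R -> Prop) -> Prop) {FG : Filter G} :
  G (fun b => ex_RInt f a b) ->
  filterlim (fun b => RInt f a b) G (locally l) ->
  is_RInt_gen f (at_point a) G l.
Proof.
  intros Hex Hlim P HP.
  apply Filter_prod with (Q := fun x => x = a)
    (R := fun b => ex_RInt f a b /\ P (RInt f a b)).
  - reflexivity.
  - apply filter_and; [exact Hex | exact (Hlim P HP)].
  - intros x b -> [Hb HPb]. eexists; split; [exact (RInt_correct _ _ _ Hb) | exact HPb].
Qed.

Lemma is_RInt_gen_of_lim_lower (f : R -> R) (b l : R) (G : (R -> Prop) -> Prop) {FG : Filter G} :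
  G (fun a => ex_RInt f a b) ->
  filterlim (fun a => RInt f a b) G (locally l) ->
  is_RInt_gen f G (at_point b) l.
Proof.
  intros Hex Hlim P HP.
  apply Filter_prod with (Q := fun a => ex_RInt f a b /\ P (RInt f a b))
    (R := fun x => x = b).
  - apply filter_and; [exact Hex | exact (Hlim P HP)].
  - reflexivity.
  - intros a x [Ha HPa] ->. eexists; split; [exact (RInt_correct _ _ _ Ha) | exact HPa].
Qed.

Definition gamma_integrand (s t : R) : R := Rpower t (s - 1) * exp (- t).

Lemma is_derive_Rpower_l y x : 0 < x -> is_derive (fun t => Rpower t y) x (y * Rpower x (y - 1)).
Proof. intros Hx. apply is_derive_Reals. now apply derivable_pt_lim_power. Qed.

Lemma gamma_integrand_continuous s x : 0 < x -> continuous (gamma_integrand s) x.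
Proof.
  intros Hx. apply (ex_derive_continuous (K := R_AbsRing) (V := R_NormedModule)).
  eexists. apply (is_derive_mult (fun t => Rpower t (s - 1)) (fun t => exp (- t))).
  - now apply is_derive_Rpower_l.
  - auto_derive; easy.
  - intros; apply Rmult_comm.
Qed.

Lemma ex_RInt_gamma_integrand s a b : 0 < a -> 0 < b -> ex_RInt (gamma_integrand s) a b.
Proof.
  intros Ha Hb. apply (ex_RInt_continuous (V := R_CompleteNormedModule)).
  intros z Hz. apply gamma_integrand_continuous.
  enough (0 < Rmin a b) by lra. now apply Rmin_glb_lt.
Qed.

Lemma gamma_integrand_pos s t : 0 < t -> 0 < gamma_integrand s t.
Proof. intros. apply Rmult_lt_0_compat; apply exp_pos. Qed.

Lemma RInt_gamma_integrand_ge_0 s a b : 0 < a -> a <= b -> 0 <= RInt (gamma_integrand s) a b.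
Proof.
  intros Ha Hab. apply RInt_ge_0; [lra | apply ex_RInt_gamma_integrand; lra |].
  intros t Ht. left. apply gamma_integrand_pos. lra.
Qed.

Lemma gamma_integrand_le_1 s t : 1 <= s -> 0 < t <= 1 -> gamma_integrand s t <= 1.
Proof.
  intros Hs Ht. unfold gamma_integrand, Rpower.
  assert (ln t <= 0) by (rewrite <- ln_1; apply ln_le; lra).
  assert (exp ((s - 1) * ln t) <= exp 0) by (apply exp_le; nra).
  assert (exp (- t) <= exp 0) by (apply exp_le; lra).
  rewrite exp_0 in *.
  pose proof (exp_pos ((s - 1) * ln t)). pose proof (exp_pos (- t)).
  nra.
Qed.

Lemma gamma_integrand_le_inv_sq s t n :
  1 <= t -> s + 1 <= INR n -> gamma_integrand s t <= INR (Factorial.fact n) / t ^ 2.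
Proof.
  intros Ht Hn.
  pose proof (Rpower_mul_exp_neg_le_fact ((s - 1) + 2) t n Ht ltac:(lra)) as H.
  rewrite Rpower_plus in H.
  replace (Rpower t 2) with (t ^ 2) in H
    by (replace 2 with (INR 2) by (simpl; lra); rewrite Rpower_pow; [reflexivity | lra]).
  assert (0 < t ^ 2) by (apply pow_lt; lra).
  unfold gamma_integrand.
  apply Rmult_le_reg_r with (t ^ 2); [lra|].
  replace (INR (Factorial.fact n) / t ^ 2 * t ^ 2) with (INR (Factorial.fact n)) by (field; lra).
  nra.
Qed.

Lemma RInt_C_div_sq C x : 1 <= x -> RInt (fun t => C / t ^ 2) 1 x = C - C / x.
Proof.
  intros Hx. apply is_RInt_unique.
  replace (C - C / x) with (minus ((fun t => - C / t) x) ((fun t => - C / t) 1))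
    by (unfold minus, plus, opp; simpl; field; lra).
  apply (is_RInt_derive (V := R_CompleteNormedModule));
    intros t Ht; rewrite Rmin_left, Rmax_right in Ht by lra.
  - auto_derive; [lra | field; lra].
  - apply (ex_derive_continuous (K := R_AbsRing) (V := R_NormedModule)).
    auto_derive. nra.
Qed.

Lemma is_RInt_gen_gamma_integrand_1_oo s : 1 <= s ->
  exists l, is_RInt_gen (gamma_integrand s) (at_point 1) (Rbar_locally p_infty) l /\ 0 <= l.
Proof.
  intros Hs.
  destruct (INR_archimed 1 (s + 1) ltac:(lra)) as [n Hn].
  set (C := INR (Factorial.fact n)).
  destruct (nondecreasing_bounded_lim (fun b => RInt (gamma_integrand s) 1 b) 1 C)
    as [l [Hle Hlim]].
  - intros x y Hx Hxy.
    rewrite <- (RInt_Chasles (V := R_CompleteNormedModule) _ 1 x y)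
      by (apply ex_RInt_gamma_integrand; lra).
    pose proof (RInt_gamma_integrand_ge_0 s x y ltac:(lra) Hxy).
    unfold plus; simpl. lra.
  - intros x Hx.
    apply Rle_trans with (RInt (fun t => C / t ^ 2) 1 x).
    + apply RInt_le; [lra | apply ex_RInt_gamma_integrand; lra | |].
      * apply (ex_RInt_continuous (V := R_CompleteNormedModule)).
        intros z Hz. rewrite Rmin_left, Rmax_right in Hz by lra.
        apply (ex_derive_continuous (K := R_AbsRing) (V := R_NormedModule)).
        auto_derive. nra.
      * intros t Ht. apply gamma_integrand_le_inv_sq; lra.
    + rewrite RInt_C_div_sq by lra.
      enough (0 < C / x) by lra. apply Rdiv_lt_0_compat; [apply INR_fact_pos | lra].
  - exists l. split.
    + refine (is_RInt_gen_of_lim_upper _ _ _ _ _ Hlim).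
      exists 0. intros b Hb. apply ex_RInt_gamma_integrand; lra.
    + specialize (Hle 1 (Rle_refl 1)). simpl in Hle. now rewrite RInt_point in Hle.
Qed.

Lemma is_RInt_gen_gamma_integrand_0_1 s : 1 <= s ->
  exists l, is_RInt_gen (gamma_integrand s) (at_right 0) (at_point 1) l /\ 0 < l.
Proof.
  intros Hs.
  destruct (nondecreasing_bounded_lim (fun y => RInt (gamma_integrand s) (/ y) 1) 1 1)
    as [l [Hle Hlim]].
  - intros x y Hx Hxy.
    assert (0 < / y) by (apply Rinv_0_lt_compat; lra).
    assert (/ y <= / x) by (apply Rinv_le_contravar; lra).
    rewrite <- (RInt_Chasles (V := R_CompleteNormedModule) _ (/ y) (/ x) 1)
      by (apply ex_RInt_gamma_integrand; lra).
    pose proof (RInt_gamma_integrand_ge_0 s (/ y) (/ x) ltac:(lra) ltac:(lra)).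
    unfold plus; simpl. lra.
  - intros x Hx.
    assert (0 < / x) by (apply Rinv_0_lt_compat; lra).
    assert (/ x <= 1) by (rewrite <- Rinv_1; apply Rinv_le_contravar; lra).
    apply Rle_trans with (RInt (fun _ => 1) (/ x) 1).
    + apply RInt_le; [lra | apply ex_RInt_gamma_integrand; lra | apply ex_RInt_const |].
      intros t Ht. apply gamma_integrand_le_1; lra.
    + rewrite RInt_const. unfold scal; simpl; unfold mult; simpl. lra.
  - exists l. split.
    + refine (is_RInt_gen_of_lim_lower _ _ _ _ _ _).
      * exists (mkposreal 1 Rlt_0_1). intros y _ Hy. apply ex_RInt_gamma_integrand; lra.
      * eapply filterlim_ext_loc;
          [| exact (filterlim_comp _ _ _ _ _ _ _ _ filterlim_Rinv_0_right Hlim)].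
        exists (mkposreal 1 Rlt_0_1). intros y _ Hy. simpl. now rewrite Rinv_inv.
    + eapply Rlt_le_trans; [| exact (Hle 2 ltac:(lra))]. simpl.
      apply RInt_gt_0; [lra | intros x Hx; apply gamma_integrand_pos; lra |].
      intros x Hx. apply gamma_integrand_continuous. lra.
Qed.

Lemma Gamma_unique s l :
  is_RInt_gen (gamma_integrand s) (at_right 0) (Rbar_locally p_infty) l -> Gamma s = l.
Proof.
  exact (is_RInt_gen_unique (V := R_CompleteNormedModule)
    (FFa := Proper_StrongProper _ (at_right_proper_filter 0))
    (FFb := Proper_StrongProper _ (Rbar_locally_filter p_infty)) (gamma_integrand s) l).
Qed.

Lemma is_RInt_gen_Gamma s : 1 <= s ->
  is_RInt_gen (gamma_integrand s) (at_right 0) (Rbar_locally p_infty) (Gamma s) /\ 0 < Gamma s.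
Proof.
  intros Hs.
  destruct (is_RInt_gen_gamma_integrand_0_1 s Hs) as [l1 [H1 Hl1]].
  destruct (is_RInt_gen_gamma_integrand_1_oo s Hs) as [l2 [H2 Hl2]].
  pose proof (is_RInt_gen_Chasles (V := R_NormedModule) _ 1 _ _ H1 H2) as H.
  rewrite (Gamma_unique s _ H). split; [exact H | unfold plus; simpl; lra].
Qed.

Lemma Gamma_pos s : 1 <= s -> 0 < Gamma s.
Proof. intros Hs. now apply is_RInt_gen_Gamma. Qed.

Definition gamma_antiderivative_part (s t : R) : R := - (Rpower t s * exp (- t)).

Lemma is_derive_gamma_antiderivative_part s x : 0 < x ->
  is_derive (gamma_antiderivative_part s) x
    (gamma_integrand (s + 1) x - s * gamma_integrand s x).
Proof.
  intros Hx. unfold gamma_antiderivative_part, gamma_integrand.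
  replace (s + 1 - 1) with s by ring.
  evar (d : R).
  assert (H : is_derive (fun t => Rpower t s * exp (- t)) x d).
  { apply (is_derive_mult (fun t => Rpower t s) (fun t => exp (- t))).
    - now apply is_derive_Rpower_l.
    - auto_derive; easy.
    - intros; apply Rmult_comm. }
  subst d. apply (is_derive_opp (fun t => Rpower t s * exp (- t))) in H.
  eapply is_derive_ext; [intros; reflexivity|].
  match type of H with is_derive _ _ ?v =>
    replace (Rpower x s * exp (- x) - s * (Rpower x (s - 1) * exp (- x))) with v
      by (unfold opp, plus, mult; simpl; ring) end.
  exact H.
Qed.

Lemma Derive_gamma_antiderivative_part s x : 0 < x ->
  Derive (gamma_antiderivative_part s) x = gamma_integrand (s + 1) x - s * gamma_integrand s x.
Proof. intros Hx. apply is_derive_unique. now apply is_derive_gamma_antiderivative_part. Qed.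

Lemma gamma_antiderivative_part_lim_0 s : 1 <= s ->
  filterlim (gamma_antiderivative_part s) (at_right 0) (locally 0).
Proof.
  intros Hs. apply filterlim_locally. intros eps.
  assert (Hpos : 0 < Rmin 1 eps) by (apply Rmin_glb_lt; [lra | apply cond_pos]).
  exists (mkposreal _ Hpos). intros t Ht Htpos.
  change (Rabs (t - 0) < Rmin 1 eps) in Ht. apply ball_R_abs.
  rewrite Rminus_0_r, Rabs_pos_eq in Ht by lra.
  pose proof (Rmin_l 1 eps). pose proof (Rmin_r 1 eps).
  assert (ln t <= 0) by (rewrite <- ln_1; apply ln_le; lra).
  assert (Hpow : Rpower t s <= t).
  { unfold Rpower. rewrite <- (exp_ln t) at 2 by lra. apply exp_le. nra. }
  assert (exp (- t) <= exp 0) by (apply exp_le; lra). rewrite exp_0 in *.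
  pose proof (exp_pos (s * ln t)). pose proof (exp_pos (- t)).
  unfold gamma_antiderivative_part, Rpower in *.
  rewrite Rminus_0_r, Rabs_Ropp, Rabs_pos_eq by nra. nra.
Qed.

Lemma gamma_antiderivative_part_lim_p_infty s :
  filterlim (gamma_antiderivative_part s) (Rbar_locally p_infty) (locally 0).
Proof.
  destruct (INR_archimed 1 (s + 1) ltac:(lra)) as [n Hn].
  set (C := INR (Factorial.fact n)).
  assert (HC : 0 < C) by apply INR_fact_pos.
  apply filterlim_locally. intros eps. pose proof (cond_pos eps).
  exists (Rmax 1 (C / eps)). intros t Ht.
  assert (1 < t) by (eapply Rle_lt_trans; [apply Rmax_l | exact Ht]).
  assert (HCt : C < eps * t).
  { assert (C / eps < t) by (eapply Rle_lt_trans; [apply Rmax_r | exact Ht]).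
    apply Rmult_lt_reg_r with (/ eps); [now apply Rinv_0_lt_compat|].
    replace (eps * t * / eps) with t by (field; lra). exact H1. }
  pose proof (Rpower_mul_exp_neg_le_fact (s + 1) t n ltac:(lra) ltac:(lra)) as Hb.
  rewrite Rpower_plus, Rpower_1 in Hb by lra.
  pose proof (exp_pos (s * ln t)). pose proof (exp_pos (- t)).
  apply ball_R_abs. unfold gamma_antiderivative_part, Rpower in *.
  rewrite Rminus_0_r, Rabs_Ropp, Rabs_pos_eq by nra.
  fold C in Hb. nra.
Qed.

Lemma eventually_Rmin_pos :
  filter_prod (at_right 0) (Rbar_locally p_infty) (fun ab : R * R => 0 < Rmin (fst ab) (snd ab)).
Proof.
  apply Filter_prod with (Q := fun a => 0 < a) (R := fun b => 0 < b).
  - exists (mkposreal 1 Rlt_0_1). now intros y _ Hy.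
  - exists 0. now intros.
  - intros a b Ha Hb. now apply Rmin_glb_lt.
Qed.

Lemma is_RInt_gen_gamma_by_parts s : 1 <= s ->
  is_RInt_gen (fun t => gamma_integrand (s + 1) t - s * gamma_integrand s t)
    (at_right 0) (Rbar_locally p_infty) 0.
Proof.
  intros Hs.
  assert (HD : is_RInt_gen (Derive (gamma_antiderivative_part s))
                 (at_right 0) (Rbar_locally p_infty) (0 - 0)).
  { apply is_RInt_gen_Derive.
    - eapply filter_imp; [| exact eventually_Rmin_pos]. intros [a b] Hab x [Hx _].
      simpl in *. eexists. apply is_derive_gamma_antiderivative_part. lra.
    - eapply filter_imp; [| exact eventually_Rmin_pos]. intros [a b] Hab x [Hx _].
      simpl in *.
      apply continuous_ext_loc with
        (fun y => gamma_integrand (s + 1) y - s * gamma_integrand s y).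
      + assert (Hx0 : 0 < x / 2) by lra.
        exists (mkposreal _ Hx0). intros y Hy.
        change (Rabs (y - x) < x / 2) in Hy. apply Rabs_def2 in Hy.
        symmetry. apply Derive_gamma_antiderivative_part. lra.
      + apply continuity_pt_filterlim, continuity_pt_minus;
          [| apply continuity_pt_mult; [apply continuity_pt_const; now intros ? ? |]];
          apply continuity_pt_filterlim, gamma_integrand_continuous; lra.
    - now apply gamma_antiderivative_part_lim_0.
    - apply gamma_antiderivative_part_lim_p_infty. }
  rewrite Rminus_0_r in HD.
  eapply is_RInt_gen_ext; [| exact HD].
  eapply filter_imp; [| exact eventually_Rmin_pos]. intros [a b] Hab x [Hx _].
  simpl in *. apply Derive_gamma_antiderivative_part. lra.
Qed.

Lemma Gamma_succ s : 1 <= s -> Gamma (s + 1) = s * Gamma s.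
Proof.
  intros Hs. apply Gamma_unique.
  pose proof (is_RInt_gen_scal (V := R_NormedModule) _ s _
                (proj1 (is_RInt_gen_Gamma s Hs))) as HsG.
  pose proof (is_RInt_gen_plus (V := R_NormedModule) _ _ _ _ HsG
                (is_RInt_gen_gamma_by_parts s Hs)) as H.
  replace (s * Gamma s) with (plus (scal s (Gamma s)) 0)
    by (unfold plus, scal; simpl; unfold mult; simpl; ring).
  eapply is_RInt_gen_ext; [| exact H].
  apply filter_forall. intros ? ? _. unfold plus, scal; simpl; unfold mult; simpl. ring.
Qed.

Definition bessel_coef (mu : R) (k : nat) : R :=
  / (INR (Factorial.fact k) * Gamma (INR k + mu + 1)).

Definition bessel_series (mu z : R) : R := PSeries (bessel_coef mu) z.

Section BesselSeries.

Variable mu : R.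
Hypothesis Hmu : 0 <= mu.

Lemma Gamma_index_pos k : 0 < Gamma (INR k + mu + 1).
Proof. apply Gamma_pos. pose proof (pos_INR k). lra. Qed.

Lemma Gamma_index_succ k :
  Gamma (INR k + mu + 1 + 1) = (INR k + mu + 1) * Gamma (INR k + mu + 1).
Proof. apply Gamma_succ. pose proof (pos_INR k). lra. Qed.

Lemma bessel_coef_pos k : 0 < bessel_coef mu k.
Proof.
  apply Rinv_0_lt_compat, Rmult_lt_0_compat; [apply INR_fact_pos | apply Gamma_index_pos].
Qed.

Lemma bessel_coef_succ k :
  bessel_coef mu (S k) = bessel_coef mu k / (INR (S k) * (INR k + mu + 1)).
Proof.
  unfold bessel_coef.
  replace (INR (S k) + mu + 1) with (INR k + mu + 1 + 1) by (rewrite S_INR; ring).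
  rewrite Gamma_index_succ.
  change (Factorial.fact (S k)) with (S k * Factorial.fact k)%nat.
  pose proof (INR_fact_pos k). pose proof (Gamma_index_pos k). pose proof (pos_INR k).
  rewrite mult_INR, S_INR. field. repeat split; lra.
Qed.

Lemma bessel_coef_shift k : bessel_coef mu k = (INR k + mu + 1) * bessel_coef (mu + 1) k.
Proof.
  unfold bessel_coef.
  replace (INR k + (mu + 1) + 1) with (INR k + mu + 1 + 1) by ring.
  rewrite Gamma_index_succ.
  pose proof (INR_fact_pos k). pose proof (Gamma_index_pos k). pose proof (pos_INR k).
  field. repeat split; lra.
Qed.

Lemma PS_derive_bessel_coef k : PS_derive (bessel_coef mu) k = bessel_coef (mu + 1) k.
Proof.
  unfold PS_derive. rewrite bessel_coef_succ, bessel_coef_shift, S_INR.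
  pose proof (pos_INR k). field. lra.
Qed.

Lemma CV_radius_bessel_coef : CV_radius (bessel_coef mu) = p_infty.
Proof.
  apply CV_radius_infinite_DAlembert.
  - intros n. apply Rgt_not_eq, bessel_coef_pos.
  - apply is_lim_seq_le_le with (u := fun _ => 0) (w := fun n => / INR (S n)).
    + intros n. rewrite bessel_coef_succ.
      pose proof (bessel_coef_pos n). pose proof (pos_INR n). rewrite S_INR.
      replace (bessel_coef mu n / ((INR n + 1) * (INR n + mu + 1)) / bessel_coef mu n)
        with (/ ((INR n + 1) * (INR n + mu + 1))) by (field; repeat split; lra).
      assert (0 < / ((INR n + 1) * (INR n + mu + 1))) by (apply Rinv_0_lt_compat; nra).
      rewrite Rabs_pos_eq by lra. split; [lra | apply Rinv_le_contravar; nra].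
    + apply is_lim_seq_const.
    + apply (is_lim_seq_incr_1 (fun n => / INR n) 0).
      replace (Finite 0) with (Rbar_inv p_infty) by reflexivity.
      apply is_lim_seq_inv; [apply is_lim_seq_INR | easy].
Qed.

Lemma ex_pseries_bessel_coef z : ex_pseries (bessel_coef mu) z.
Proof. apply CV_radius_inside. now rewrite CV_radius_bessel_coef. Qed.

Lemma is_derive_bessel_series z : is_derive (bessel_series mu) z (bessel_series (mu + 1) z).
Proof.
  unfold bessel_series.
  rewrite <- (PSeries_ext _ _ z PS_derive_bessel_coef).
  apply is_derive_PSeries. now rewrite CV_radius_bessel_coef.
Qed.

Lemma bessel_series_pos z : 0 <= z -> 0 < bessel_series mu z.
Proof.
  intros Hz. unfold bessel_series. rewrite PSeries_decr_1 by apply ex_pseries_bessel_coef.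
  enough (0 <= PSeries (PS_decr_1 (bessel_coef mu)) z)
    by (pose proof (bessel_coef_pos 0); nra).
  unfold PSeries.
  rewrite <- (Rmult_0_l (Series (fun k => PS_decr_1 (bessel_coef mu) k * z ^ k))),
    <- Series_scal_l.
  apply Series_le.
  - intros n. unfold PS_decr_1.
    pose proof (bessel_coef_pos (S n)). pose proof (pow_le z n Hz). split; nra.
  - assert (HE : ex_pseries (PS_decr_1 (bessel_coef mu)) z).
    { apply CV_radius_inside. now rewrite CV_radius_decr_1, CV_radius_bessel_coef. }
    eapply ex_series_ext; [| exact HE].
    intros n. unfold scal; simpl; unfold mult; simpl. rewrite pow_n_pow. apply Rmult_comm.
Qed.

End BesselSeries.

Lemma bessel_series_recurrence mu z : 0 <= mu ->
  bessel_series mu z = (mu + 1) * bessel_series (mu + 1) z + z * bessel_series (mu + 2) z.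
Proof.
  intros Hmu.
  set (c := bessel_coef (mu + 1)).
  assert (Hc : CV_radius c = p_infty) by (apply CV_radius_bessel_coef; lra).
  assert (H1 : ex_pseries (PS_scal (mu + 1) c) z).
  { apply ex_pseries_scal; [unfold mult; simpl; ring | apply ex_pseries_bessel_coef; lra]. }
  assert (H2 : ex_pseries (PS_incr_1 (PS_derive c)) z).
  { apply ex_pseries_incr_1, ex_pseries_derive. now rewrite Hc. }
  transitivity (PSeries (PS_plus (PS_scal (mu + 1) c) (PS_incr_1 (PS_derive c))) z).
  - apply PSeries_ext. intros [|n];
      unfold PS_plus, PS_scal, PS_incr_1, plus, scal; simpl; unfold mult; simpl;
      rewrite bessel_coef_shift by exact Hmu; fold c.
    + unfold zero; simpl. ring.
    + unfold PS_derive. rewrite S_INR. ring.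
  - rewrite PSeries_plus, PSeries_incr_1, PSeries_scal by easy.
    replace (mu + 2) with (mu + 1 + 1) by ring.
    unfold bessel_series. f_equal. f_equal.
    apply PSeries_ext. intros n. apply PS_derive_bessel_coef. lra.
Qed.

Lemma besselI_eq_bessel_series mu x : 0 < x ->
  besselI mu x = Rpower (x / 2) mu * bessel_series mu ((x / 2) ^ 2).
Proof.
  intros Hx. unfold besselI, bessel_series, PSeries. rewrite <- Series_scal_l.
  apply Series_ext. intros k. unfold bessel_coef.
  rewrite Rpower_plus.
  replace (2 * INR k) with (INR (2 * k)) by (rewrite mult_INR; simpl; ring).
  rewrite Rpower_pow, <- pow_mult by lra.
  unfold Rdiv. ring.
Qed.

Definition bessel_ratio (nu x : R) : R :=
  (x / 2) * bessel_series (nu + 1) ((x / 2) ^ 2) / bessel_series nu ((x / 2) ^ 2).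

Lemma Psi_eq_bessel_ratio nu x : 0 <= nu -> 0 < x -> Psi nu x = bessel_ratio nu x.
Proof.
  intros Hnu Hx. unfold Psi, bessel_ratio. rewrite !besselI_eq_bessel_series by lra.
  rewrite Rpower_plus, Rpower_1 by lra.
  pose proof (exp_pos (nu * ln (x / 2))).
  pose proof (bessel_series_pos nu Hnu ((x / 2) ^ 2) (pow2_ge_0 _)).
  unfold Rpower. field. lra.
Qed.

Lemma bessel_ratio_pos nu x : 0 <= nu -> 0 < x -> 0 < bessel_ratio nu x.
Proof.
  intros Hnu Hx. unfold bessel_ratio.
  pose proof (bessel_series_pos nu Hnu _ (pow2_ge_0 (x / 2))).
  pose proof (bessel_series_pos (nu + 1) ltac:(lra) _ (pow2_ge_0 (x / 2))).
  apply Rdiv_lt_0_compat; nra.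
Qed.

Lemma is_derive_bessel_series_half_sq mu x : 0 <= mu ->
  is_derive (fun y => bessel_series mu ((y / 2) ^ 2)) x
    (x / 2 * bessel_series (mu + 1) ((x / 2) ^ 2)).
Proof.
  intros Hmu.
  apply (is_derive_comp (bessel_series mu) (fun y => (y / 2) ^ 2)).
  - now apply is_derive_bessel_series.
  - auto_derive; [easy | field].
Qed.

Lemma is_derive_bessel_ratio nu x : 0 <= nu -> 0 < x ->
  is_derive (bessel_ratio nu) x
    (1 - (2 * nu + 1) * bessel_ratio nu x / x - bessel_ratio nu x ^ 2).
Proof.
  intros Hnu Hx.
  set (z := (x / 2) ^ 2).
  assert (Hrec : bessel_series (nu + 2) z
                 = (bessel_series nu z - (nu + 1) * bessel_series (nu + 1) z) / z).
  { rewrite (bessel_series_recurrence nu z Hnu). unfold z. field. lra. }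
  set (F0 := bessel_series nu z) in *. set (F1 := bessel_series (nu + 1) z) in *.
  assert (HF0 : 0 < F0) by (apply bessel_series_pos, pow2_ge_0; lra).
  assert (Hnum : is_derive (fun y => y / 2 * bessel_series (nu + 1) ((y / 2) ^ 2)) x
                   (1 / 2 * F1 + x / 2 * (x / 2 * bessel_series (nu + 1 + 1) z))).
  { apply (is_derive_mult (fun y => y / 2) (fun y => bessel_series (nu + 1) ((y / 2) ^ 2))).
    - auto_derive; easy.
    - apply is_derive_bessel_series_half_sq. lra.
    - intros; apply Rmult_comm. }
  pose proof (is_derive_div _ _ x _ _ Hnum
                (is_derive_bessel_series_half_sq nu x Hnu) (Rgt_not_eq _ _ HF0)) as H.
  eapply is_derive_ext; [intros; reflexivity |].
  replace (nu + 1 + 1) with (nu + 2) in H by ring. fold z F0 F1 in H. rewrite Hrec in H.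
  match type of H with is_derive _ _ ?d => replace (1 - _ - _) with d end; [exact H|].
  unfold bessel_ratio. fold z F0 F1. unfold z. field. lra.
Qed.

Definition defect_rhs (a x w : R) : R := a - 2 * w + w * (1 - a + w) / x.

Lemma defect_rhs_le_neg a x w d : 1 <= a -> 0 < d -> (a + 1) ^ 2 < d * x ->
  w < x -> a / 2 + d < w -> defect_rhs a x w <= - Rmin d 1.
Proof.
  intros Ha Hd Hdx Hwx Hw. unfold defect_rhs.
  pose proof (Rmin_l d 1). pose proof (Rmin_r d 1).
  assert (Hx : 0 < x) by nra.
  assert (Hquad : w * (1 - a + w) <= w * w) by nra.
  destruct (Rle_lt_dec w (a + 1)) as [Hsmall | Hlarge].
  - enough (w * (1 - a + w) / x <= d) by lra.
    apply Rdiv_le_of_le_mul; nra.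
  - enough (w * (1 - a + w) / x <= w) by lra.
    apply Rdiv_le_of_le_mul; nra.
Qed.

Lemma defect_rhs_ge_pos a x w d : 1 <= a -> 0 < d -> (a + 1) ^ 2 < d * x ->
  w < a / 2 - d -> Rmin d 1 <= defect_rhs a x w.
Proof.
  intros Ha Hd Hdx Hw. unfold defect_rhs.
  pose proof (Rmin_l d 1).
  assert (Hx : 0 < x) by nra.
  enough (- d <= w * (1 - a + w) / x) by lra.
  rewrite <- (Ropp_involutive (w * (1 - a + w) / x)). apply Ropp_le_contravar.
  replace (- (w * (1 - a + w) / x)) with (- (w * (1 - a + w)) / x) by (field; lra).
  apply Rdiv_le_of_le_mul; [exact Hx |].
  destruct (Rlt_le_dec w 0); nra.
Qed.

Definition bessel_defect (nu x : R) : R := x * (1 - bessel_ratio nu x).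

Lemma is_derive_bessel_defect nu x : 0 <= nu -> 0 < x ->
  is_derive (bessel_defect nu) x (defect_rhs (2 * nu + 1) x (bessel_defect nu x)).
Proof.
  intros Hnu Hx.
  assert (H : is_derive (fun y => y * (1 - bessel_ratio nu y)) x
                (1 * (1 - bessel_ratio nu x)
                 + x * (0 - (1 - (2 * nu + 1) * bessel_ratio nu x / x - bessel_ratio nu x ^ 2)))).
  { apply (is_derive_mult (fun y => y) (fun y => 1 - bessel_ratio nu y)).
    - auto_derive; easy.
    - apply (is_derive_minus (fun _ => 1) (bessel_ratio nu)).
      + auto_derive; easy.
      + now apply is_derive_bessel_ratio.
    - intros; apply Rmult_comm. }
  eapply is_derive_ext; [intros; reflexivity |].
  match type of H with is_derive _ _ ?d => replace (defect_rhs _ _ _) with d end; [exact H |].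
  unfold defect_rhs, bessel_defect. field. lra.
Qed.

Lemma is_lim_bessel_defect nu : 0 <= nu ->
  is_lim (bessel_defect nu) p_infty ((2 * nu + 1) / 2).
Proof.
  intros Hnu. set (a := 2 * nu + 1).
  apply is_lim_spec. intros eps.
  set (d := eps / 2). assert (Hd : 0 < d) by (unfold d; destruct eps; simpl; lra).
  set (X := (a + 1) ^ 2 / d + 1).
  assert (HX : forall x, X < x -> 0 < x /\ (a + 1) ^ 2 < d * x).
  { intros x Hx. unfold X in Hx.
    assert (0 <= (a + 1) ^ 2 / d) by (apply Rdiv_le_0_compat; [apply pow2_ge_0 | lra]).
    split; [lra |].
    apply Rmult_lt_reg_r with (/ d); [now apply Rinv_0_lt_compat |].
    replace (d * x * / d) with x by (field; lra). lra. }
  destruct (eventually_near_of_is_derive (bessel_defect nu)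
              (fun x => defect_rhs a x (bessel_defect nu x)) X (a / 2) d (Rmin d 1))
    as [Y HY].
  - apply Rmin_glb_lt; lra.
  - intros x Hx. apply is_derive_bessel_defect; [exact Hnu | apply HX, Hx].
  - intros x Hx Hw. destruct (HX x Hx) as [Hx0 Hdx].
    apply defect_rhs_le_neg; [unfold a; lra | exact Hd | exact Hdx | | exact Hw].
    pose proof (bessel_ratio_pos nu x Hnu Hx0). unfold bessel_defect. nra.
  - intros x Hx Hw. destruct (HX x Hx) as [Hx0 Hdx].
    apply defect_rhs_ge_pos; [unfold a; lra | exact Hd | exact Hdx | exact Hw].
  - exists Y. intros x Hx. specialize (HY x Hx). unfold d in HY. destruct eps; simpl in *. lra.
Qed.

Lemma is_lim_bessel_ratio nu : 0 <= nu -> is_lim (bessel_ratio nu) p_infty 1.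
Proof.
  intros Hnu.
  apply is_lim_ext_loc with (fun x => 1 - bessel_defect nu x / x).
  - exists 0. intros x Hx. unfold bessel_defect. field. lra.
  - eapply is_lim_minus;
      [apply is_lim_const | exact (is_lim_div_id _ _ (is_lim_bessel_defect nu Hnu)) |].
    unfold is_Rbar_minus, is_Rbar_plus. simpl. do 2 f_equal. ring.
Qed.

Theorem mainTheorem7 (nu : R) (hnu : 0 <= nu) :
  is_lim (fun x => xi nu x) p_infty (4 * (nu + 1) / (2 * nu + 1)).
Proof.
  assert (Hnum : is_lim (fun x => x * ln (1 - 2 * (nu + 1) * bessel_ratio nu x / x))
                   p_infty (- (2 * (nu + 1)))).
  { apply is_lim_mul_ln_one_sub_div.
    replace (Finite (2 * (nu + 1))) with (Rbar_mult (2 * (nu + 1)) 1) by (simpl; f_equal; ring).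
    apply is_lim_scal_l, is_lim_bessel_ratio, hnu. }
  pose proof (is_lim_mul_ln_one_sub_div _ _ (is_lim_bessel_defect nu hnu)) as Hden.
  replace (Finite (4 * (nu + 1) / (2 * nu + 1)))
    with (Rbar_div (- (2 * (nu + 1))) (- ((2 * nu + 1) / 2))) by (simpl; f_equal; field; lra).
  eapply is_lim_ext_loc;
    [| apply (is_lim_div _ _ p_infty _ _ Hnum Hden); [simpl; injection; lra | easy]].
  exists 0. intros x Hx.
  rewrite Rdiv_mult_l_l by lra.
  unfold xi, bessel_defect. rewrite Psi_eq_bessel_ratio by lra.
  f_equal; f_equal; field; lra.
Qed.
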